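(* Let $\varrho$ be a density operator on a Hilbert space $\mathcal H_d$ of finite dimension $d$. Then $$\sup_{\xi}\|\varrho-\xi\|_{\mathrm{tr}}=2\big(1-b(\varrho)\big),$$ where the supremum is over all density operators $\xi$ on $\mathcal H_d$ and $\|A\|_{\mathrm{tr}}=\operatorname{tr}|A|$.
   Context: For the convex set $Z=\mathcal S(\mathcal H_d)$ of density operators and $x,y\in Z$, the weight function is $t_y(x)=\sup\{0\leq t<1 : \frac{y-tx}{1-t}\in Z\}$, and the boundariness of $y$ is $b(y)=\inf_{x\in Z}t_y(x)$. (For states, $b(\varrho)$ equals the smallest eigenvalue of $\varrho$.) *)

From HB Require Import structures.
From mathcomp Require Import all_boot all_order all_algebra.
From mathcomp Require Import sesquilinear spectral.
From mathcomp Require Import complex.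
From mathcomp Require Import boolp classical_sets reals.

Set Implicit Arguments.
Unset Strict Implicit.
Unset Printing Implicit Defensive.

Import Order.TTheory GRing.Theory Num.Theory.
Local Open Scope ring_scope.
Local Open Scope classical_set_scope.
Local Open Scope complex_scope.
Local Open Scope sesquilinear_scope.

Definition density (R : realType) (d : nat) (rho : 'M[R[i]]_d) : Prop :=
  rho \is hermsymmx /\
  (forall v : 'rV[R[i]]_d, 0 <= (v *m rho *m v ^t*) 0 0) /\
  \tr rho = 1.

Definition absmx (R : realType) (d : nat) (A : 'M[R[i]]_d) : 'M[R[i]]_d :=
  let M := A ^t* *m A in
  let P := spectralmx M in
  invmx P *m diag_mx (map_mx (fun z : R[i] => sqrtC z) (spectral_diag M)) *m P.

Definition trnorm (R : realType) (d : nat) (A : 'M[R[i]]_d) : R :=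
  complex.Re (\tr (absmx A)).

Definition weight (R : realType) (d : nat) (y x : 'M[R[i]]_d) : R :=
  sup [set t : R | 0 <= t < 1 /\ density ((1 - t%:C)^-1 *: (y - t%:C *: x))].

Definition boundariness (R : realType) (d : nat) (y : 'M[R[i]]_d) : R :=
  inf [set weight y x | x in [set x | density x]].

From mathcomp Require Import all_boot all_order all_algebra.
From mathcomp Require Import sesquilinear spectral complex.
From mathcomp Require Import classical_sets reals.
From mathcomp Require Import lra.

(* Write rho = U^* diag(mu) U and let m be the least eigenvalue. Every state
   xi satisfies xi <= 1 in the operator order while rho >= m, so
   (rho - t xi) / (1 - t) is a state for all t <= m and every weight is at
   least m; for the eigenprojector xi0 of m positivity fails beyond t = m,
   hence b(rho) = m. The trace distance to xi0 is 2 (1 - m). For an arbitrary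
   state xi, in an eigenbasis of rho - xi its eigenvalues are r_i - x_i, where
   r_i >= m and x_i >= 0 are diagonal entries of rho and xi, each summing to 1;
   the sum of the |r_i - x_i| is twice the mass of the positive part, which
   misses some index j with r_j <= x_j and is thus at most 1 - m. *)

Set Implicit Arguments.
Unset Strict Implicit.
Unset Printing Implicit Defensive.

Import Order.TTheory GRing.Theory Num.Theory.
Local Open Scope ring_scope.
Local Open Scope sesquilinear_scope.

Lemma char_poly_similar (F : fieldType) n (P A : 'M[F]_n) : P \in unitmx ->
  char_poly (invmx P *m A *m P) = char_poly A.
Proof.
move=> Pu; rewrite /char_poly /char_poly_mx.
have -> : 'X%:M - map_mx polyC (invmx P *m A *m P)
    = map_mx polyC (invmx P) *m ('X%:M - map_mx polyC A) *m map_mx polyC P.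
  rewrite mulmxBr mulmxBl !map_mxM; congr (_ - _).
  by rewrite mul_mx_scalar -scalemxAl -map_mxM mulVmx // map_mx1 scalemx1.
rewrite !det_mulmx !det_map_mx mulrC mulrA -rmorphM -det_mulmx mulmxV //.
by rewrite det1 rmorph1 mul1r.
Qed.

Lemma ler_sum_elt (R : numDomainType) (I : finType) (F : I -> R) j :
  (forall i, 0 <= F i) -> F j <= \sum_i F i.
Proof. by move=> F_ge0; rewrite (bigD1 j) //= lerDl sumr_ge0. Qed.

Lemma exists_le_of_sum_le (R : realDomainType) n (r x : 'I_n.+1 -> R) :
  \sum_j r j <= \sum_j x j -> exists j, r j <= x j.
Proof.
move=> le_rx; apply/existsP; move: le_rx; apply: contraLR => /existsPn lt_xr.
rewrite -ltNge; apply: ltr_sum => [|j _]; first by apply/hasP; exists ord0.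
by rewrite ltNge lt_xr.
Qed.

Lemma sum_abs_sub_le (R : realFieldType) n (r x : 'I_n.+1 -> R) (m : R) :
  (forall j, 0 <= x j) -> (forall j, m <= r j) -> 0 <= m ->
  \sum_j r j = 1 -> \sum_j x j = 1 -> \sum_j `|r j - x j| <= 2 * (1 - m).
Proof.
move=> x_ge0 r_ge m_ge0 sum_r sum_x.
have [j0 le_rx0] : exists j0, r j0 <= x j0.
  by apply: exists_le_of_sum_le; rewrite sum_r sum_x.
pose f j := Order.max (r j - x j) 0.
(* r - x has total mass 0, so its negative part has the same mass as f *)
have -> : \sum_j `|r j - x j| = 2 * \sum_j f j.
  have absE j : `|r j - x j| = 2 * f j - (r j - x j).
    rewrite /f; have [h|h] := leP 0 (r j - x j).
      by rewrite ger0_norm //; lra.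
    by rewrite ltr0_norm //; lra.
  under eq_bigr do rewrite absE.
  by rewrite sumrB -mulr_sumr sumrB sum_r sum_x subrr subr0.
have sum_f : \sum_j f j <= \sum_(j | j != j0) r j.
  rewrite (bigD1 j0) //= [f j0]max_r ?add0r ?subr_le0 //.
  by apply: ler_sum => j _; rewrite ge_max; have := x_ge0 j; have := r_ge j; lra.
have : 1 - r j0 = \sum_(j | j != j0) r j.
  by rewrite -sum_r (bigD1 j0) //= addrAC subrr add0r.
by have := r_ge j0; lra.
Qed.

Lemma sup_eq_max (R : realType) (E : set R) x : E x -> ubound E x -> sup E = x.
Proof.
move=> Ex ubx; apply/le_anti/andP; split; first by apply: ge_sup => //; exists x.
exact: (ub_le_sup (ex_intro _ x ubx)).
Qed.

Lemma inf_eq_min (R : realType) (E : set R) x : E x -> lbound E x -> inf E = x.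
Proof.
move=> Ex lbx; apply/le_anti/andP; split; last by apply: lb_le_inf => //; exists x.
exact: (ge_inf (ex_intro _ x lbx)).
Qed.

Section Density.
Variable R : realType.
Local Notation C := R[i].

Lemma complexRe_ge0 (z : C) : 0 <= z -> ((complex.Re z)%:C)%C = z.
Proof. by move=> z_ge0; rewrite RRe_real // ger0_real. Qed.

Lemma hermsymmxE n (A : 'M[C]_n) : (A \is hermsymmx) = (A^t* == A).
Proof. by rewrite is_hermitianmxE expr0 scale1r eq_sym. Qed.

Lemma hermsymmxB n (A B : 'M[C]_n) :
  A \is hermsymmx -> B \is hermsymmx -> A - B \is hermsymmx.
Proof.
rewrite !hermsymmxE => /eqP hA /eqP hB.
by rewrite linearB /= map_mxB hA hB.
Qed.

Lemma hermsymmxZ n (c : C) (A : 'M[C]_n) :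
  c \is Num.real -> A \is hermsymmx -> c *: A \is hermsymmx.
Proof.
move=> /CrealP hc; rewrite !hermsymmxE => /eqP hA.
by apply/eqP; rewrite linearZ /= map_mxZ hA -[c in RHS]hc.
Qed.

Lemma hermsymmx_spectral n (A : 'M[C]_n) : A \is hermsymmx ->
  A = (spectralmx A)^t* *m diag_mx (spectral_diag A) *m spectralmx A.
Proof.
move=> hA; have /orthomx_spectralP {1}-> := hermitian_normalmx hA.
by rewrite invmx_unitary ?spectral_unitarymx.
Qed.

Lemma adjmx_unitary_diag n (V : 'M[C]_n) l :
  (V^t* *m diag_mx l *m V)^t* = V^t* *m diag_mx (map_mx Num.conj l) *m V.
Proof. by rewrite !trmx_mul !map_mxM trmxCK tr_diag_mx map_diag_mx mulmxA. Qed.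

Lemma normcR (a : R) : `|(a%:C)%C| = (`|a|%:C)%C.
Proof. by rewrite normc_def /= expr0n /= addr0 sqrtr_sqr. Qed.

Lemma invr_sub1C_gt0 (t : R) : t < 1 -> 0 < (1 - (t%:C)%C)^-1.
Proof. by move=> t_lt1; rewrite invr_gt0 subr_gt0 -[X in _ < X]/((1%:C)%C) ltcR. Qed.

Lemma sum_norm_subC_le n (r x : 'I_n.+1 -> C) (m : R) :
  (forall j, 0 <= x j) -> (forall j, (m%:C)%C <= r j) -> 0 <= m ->
  \sum_j r j = 1 -> \sum_j x j = 1 ->
  complex.Re (\sum_j `|r j - x j|) <= 2 * (1 - m).
Proof.
move=> x_ge0 r_ge m_ge0 sum_r sum_x.
have r_ge0 j : 0 <= r j by apply: le_trans (r_ge j); rewrite ler0c.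
have sum_Re (y : 'I_n.+1 -> C) : (forall j, 0 <= y j) -> \sum_j y j = 1 ->
    \sum_j complex.Re (y j) = 1.
  move=> y_ge0; under eq_bigr do rewrite -(complexRe_ge0 (y_ge0 _)).
  by rewrite -rmorph_sum => /(congr1 (@complex.Re R)).
under eq_bigr do rewrite -(complexRe_ge0 (r_ge0 _)) -(complexRe_ge0 (x_ge0 _)).
under eq_bigr do rewrite -rmorphB normcR.
rewrite -rmorph_sum /=; apply: sum_abs_sub_le; rewrite ?sum_Re //.
  by move=> j; rewrite -ler0c complexRe_ge0.
by move=> j; rewrite -lecR complexRe_ge0.
Qed.

Definition qform n (v : 'rV[C]_n) (X : 'M[C]_n) : C := (v *m X *m v^t*) 0 0.

Lemma qformB n v (A B : 'M[C]_n) : qform v (A - B) = qform v A - qform v B.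
Proof. by rewrite /qform mulmxBr mulmxBl !mxE. Qed.

Lemma qformZ n v (c : C) (A : 'M[C]_n) : qform v (c *: A) = c * qform v A.
Proof. by rewrite /qform -scalemxAr -scalemxAl !mxE. Qed.

Lemma qform1_ge0 n (v : 'rV[C]_n) : 0 <= qform v 1%:M.
Proof.
rewrite /qform mulmx1 mxE; apply: sumr_ge0 => i _.
by rewrite !mxE mul_conjC_ge0.
Qed.

Lemma qform_row n (V X : 'M[C]_n) j : qform (row j V) X = (V *m X *m V^t*) j j.
Proof.
rewrite /qform !mxE; apply: eq_bigr => k _; rewrite !mxE; congr (_ * _).
by apply: eq_bigr => l _; rewrite !mxE.
Qed.

Lemma qform_diag n (U : 'M[C]_n) l v :
  qform v (U^t* *m diag_mx l *m U) = \sum_i l 0 i * `|(v *m U^t*) 0 i| ^+ 2.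
Proof.
rewrite /qform; have -> : v *m (U^t* *m diag_mx l *m U) *m v^t*
    = (v *m U^t*) *m diag_mx l *m (v *m U^t*)^t*.
  by rewrite trmx_mul map_mxM trmxCK !mulmxA.
rewrite mul_mx_diag mxE; apply: eq_bigr => i _.
by rewrite !mxE normCK mulrAC mulrC.
Qed.

Section Unitary.
Context {n : nat} {U : 'M[C]_n}.
Hypothesis U_unitary : U \is unitarymx.

Lemma mxtrace_qform_unitary X : \tr X = \sum_j qform (row j U) X.
Proof.
have UtU : U^t* *m U = 1%:M by apply: mulmx1C; apply/unitarymxP.
rewrite -[X in \tr X]mulmx1 -UtU mulmxA mxtrace_mulC mulmxA.
by apply: eq_bigr => j _; rewrite qform_row.
Qed.

Lemma qform_row_unitary_diag l j :
  qform (row j U) (U^t* *m diag_mx l *m U) = l 0 j.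
Proof.
rewrite qform_row !mulmxA (unitarymxP U_unitary) mul1mx -mulmxA.
by rewrite (unitarymxP U_unitary) mulmx1 mxE eqxx mulr1n.
Qed.

Lemma qform1_row_unitary j : qform (row j U) 1%:M = 1.
Proof. by rewrite qform_row mulmx1 (unitarymxP U_unitary) mxE eqxx. Qed.

Lemma qform1_unitary v : \sum_i `|(v *m U^t*) 0 i| ^+ 2 = qform v 1%:M.
Proof.
have UtU : U^t* *m U = 1%:M by apply: mulmx1C; apply/unitarymxP.
have := qform_diag U (const_mx 1) v; rewrite diag_const_mx mulmx1 UtU => ->.
by apply: eq_bigr => i _; rewrite [const_mx _ _ _]mxE mul1r.
Qed.

Lemma qform_unitary_diag_ge (l : 'rV[C]_n) v a : (forall i, a <= l 0 i) ->
  a * qform v 1%:M <= qform v (U^t* *m diag_mx l *m U).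
Proof.
move=> a_le; rewrite qform_diag -qform1_unitary mulr_sumr.
by apply: ler_sum => i _; rewrite ler_wpM2r ?exprn_ge0.
Qed.

Lemma qform_unitary_diag_le (l : 'rV[C]_n) v b : (forall i, l 0 i <= b) ->
  qform v (U^t* *m diag_mx l *m U) <= b * qform v 1%:M.
Proof.
move=> le_b; rewrite qform_diag -qform1_unitary mulr_sumr.
by apply: ler_sum => i _; rewrite ler_wpM2r ?exprn_ge0.
Qed.

Lemma density_unitary_diag (l : 'rV[C]_n) :
  (forall i, 0 <= l 0 i) -> \sum_i l 0 i = 1 -> density (U^t* *m diag_mx l *m U).
Proof.
move=> l_ge0 sum_l; split; [|split].
- rewrite hermsymmxE adjmx_unitary_diag; apply/eqP.
  by congr (_ *m diag_mx _ *m _); apply/rowP => i; rewrite mxE (CrealP _) ?ger0_real.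
- by move=> v; rewrite -/(qform v _) -[0](mulr0 (qform v 1%:M)) mulrC
    qform_unitary_diag_ge.
- by rewrite mxtrace_qform_unitary -sum_l; apply: eq_bigr => i _;
    rewrite qform_row_unitary_diag.
Qed.

End Unitary.

Lemma density_spectral n (x : 'M[C]_n) : density x ->
  exists (U : 'M[C]_n) (l : 'rV[C]_n),
    [/\ U \is unitarymx, x = U^t* *m diag_mx l *m U,
        forall i, 0 <= l 0 i & \sum_i l 0 i = 1].
Proof.
move=> [hx [x_psd tr_x]]; exists (spectralmx x), (spectral_diag x).
have Uu := spectral_unitarymx x; have xE := hermsymmx_spectral hx.
split=> // [i|]; first by rewrite -(qform_row_unitary_diag Uu) -xE; apply: x_psd.
by rewrite -tr_x [in RHS]xE (mxtrace_qform_unitary Uu); apply: eq_bigr => i _;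
  rewrite qform_row_unitary_diag.
Qed.

Lemma density_qform_le n (x : 'M[C]_n) v : density x -> qform v x <= qform v 1%:M.
Proof.
case/density_spectral=> V [l [Vu -> l_ge0 sum_l]].
rewrite -[qform v 1%:M]mul1r; apply: qform_unitary_diag_le => // i.
by rewrite -sum_l (ler_sum_elt i l_ge0).
Qed.

(* Compare characteristic polynomials. This is what allows [trnorm] to be
   computed from any unitary diagonalisation, not only from [spectralmx]. *)
Lemma similar_diag_perm_eq n (s t : 'rV[C]_n) (P V : 'M[C]_n) :
  P \in unitmx -> V \in unitmx ->
  invmx P *m diag_mx s *m P = invmx V *m diag_mx t *m V ->
  perm_eq [seq s 0 i | i <- index_enum 'I_n] [seq t 0 i | i <- index_enum 'I_n].
Proof.
move=> Pu Vu /(congr1 char_poly); rewrite !char_poly_similar //.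
rewrite !char_poly_trig ?diag_mx_is_trig // => charE.
apply: prod_XsubC_eq; rewrite !big_map.
transitivity (\prod_(i < n) ('X - (diag_mx s i i)%:P)).
  by apply: eq_bigr => i _; rewrite mxE eqxx mulr1n.
by rewrite charE; apply: eq_bigr => i _; rewrite mxE eqxx mulr1n.
Qed.

Lemma trnormE n (A : 'M[C]_n) :
  trnorm A = complex.Re (\sum_i sqrtC (spectral_diag (A^t* *m A) 0 i)).
Proof.
rewrite /trnorm /absmx /= mxtrace_mulC mulmxA mulmxV ?spectral_unit // mul1mx.
by rewrite mxtrace_diag; congr complex.Re; apply: eq_bigr => i _; rewrite mxE.
Qed.

Lemma adjmx_mul_unitary_diag n (V : 'M[C]_n) l : V \is unitarymx ->
  (V^t* *m diag_mx l *m V)^t* *m (V^t* *m diag_mx l *m V)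
  = V^t* *m diag_mx (\row_i (`|l 0 i| ^+ 2)) *m V.
Proof.
move=> Vu; rewrite adjmx_unitary_diag !mulmxA.
rewrite (mulmxtVK (V^t* *m diag_mx (map_mx Num.conj l)) Vu).
rewrite -[V^t* *m _ *m diag_mx l]mulmxA mulmx_diag.
by congr (_ *m diag_mx _ *m _); apply/rowP => i; rewrite !mxE normCKC.
Qed.

Lemma trnorm_adjmx_mul_unitary_diag n (A V : 'M[C]_n) s : V \is unitarymx ->
  A^t* *m A = V^t* *m diag_mx s *m V ->
  trnorm A = complex.Re (\sum_i sqrtC (s 0 i)).
Proof.
move=> Vu AtA; rewrite -(invmx_unitary Vu) in AtA.
have AtA_normal : A^t* *m A \is normalmx.
  by apply/orthomx_spectral_subproof; exists (V, s).
have /orthomx_spectralP AtAE := AtA_normal.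
have sp_perm := similar_diag_perm_eq (spectral_unit _) (unitarymx_unit Vu)
  (etrans (esym AtAE) AtA).
rewrite trnormE -(big_map (fun i => spectral_diag (A^t* *m A) 0 i) xpredT sqrtC).
by rewrite (perm_big _ sp_perm) big_map.
Qed.

Lemma trnorm_unitary_diag n (V : 'M[C]_n) l : V \is unitarymx ->
  trnorm (V^t* *m diag_mx l *m V) = complex.Re (\sum_i `|l 0 i|).
Proof.
move=> Vu; rewrite (trnorm_adjmx_mul_unitary_diag Vu (adjmx_mul_unitary_diag l Vu)).
by congr complex.Re; apply: eq_bigr => i _; rewrite mxE sqrCK.
Qed.

End Density.

Local Open Scope classical_set_scope.

Section MinimalEigenvalue.
Variable R : realType.
Local Notation C := R[i].
Variables (n : nat) (rho U : 'M[C]_n.+1) (mu : 'rV[C]_n.+1) (k : 'I_n.+1).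
Hypotheses (U_unitary : U \is unitarymx) (rhoE : rho = U^t* *m diag_mx mu *m U).
Hypotheses (mu_ge0 : forall i, 0 <= mu 0 i) (sum_mu : \sum_i mu 0 i = 1).
Hypothesis mu_min : forall i, complex.Re (mu 0 k) <= complex.Re (mu 0 i).

Let m := complex.Re (mu 0 k).

Let mu_kE : (m%:C)%C = mu 0 k.
Proof. exact: complexRe_ge0. Qed.

Let min_le_mu i : (m%:C)%C <= mu 0 i.
Proof. by rewrite -(complexRe_ge0 (mu_ge0 i)) lecR. Qed.

Let m_ge0 : 0 <= m.
Proof. by rewrite -ler0c mu_kE. Qed.

Let m_le1 : m <= 1.
Proof.
have := ler_sum_elt k mu_ge0.
by rewrite sum_mu -mu_kE -[X in _ <= X]/((1%:C)%C) lecR.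
Qed.

Let rho_density : density rho.
Proof. by rewrite rhoE; apply: density_unitary_diag. Qed.

Lemma density_rescaled_sub x (t : R) : density x -> 0 <= t -> t < 1 -> t <= m ->
  density ((1 - (t%:C)%C)^-1 *: (rho - (t%:C)%C *: x)).
Proof.
move=> x_density t_ge0 t_lt1 t_le_m; have [x_herm [_ tr_x]] := x_density.
have [rho_herm [_ tr_rho]] := rho_density.
have t_real : (t%:C)%C \is Num.real by apply/complex_realP; exists t.
have c_gt0 := invr_sub1C_gt0 t_lt1.
split; [|split].
- apply: hermsymmxZ; first by rewrite rpredV rpredB ?rpred1.
  by apply: hermsymmxB => //; apply: hermsymmxZ.
- move=> v; rewrite -/(qform v _) qformZ qformB qformZ.
  rewrite pmulr_rge0 // subr_ge0; apply: le_trans (_ : _ <= _ * _) _.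
    by apply: ler_wpM2l (density_qform_le v x_density); rewrite ler0c.
  apply: le_trans (_ : _ <= (m%:C)%C * qform v 1%:M) _.
    by apply: ler_wpM2r; rewrite ?qform1_ge0 ?lecR.
  by rewrite rhoE; apply: qform_unitary_diag_ge min_le_mu.
- rewrite mxtraceZ linearB /= mxtraceZ tr_rho tr_x mulr1 mulVf //.
  by rewrite -invr_eq0 lt0r_neq0.
Qed.

Lemma min_le_weight x : density x -> m <= weight rho x.
Proof.
move=> x_density; rewrite /weight; set S := (X in sup X).
have S_ub : ubound S 1 by move=> t [/andP[_ /ltW]].
have le_supS := ub_le_sup (ex_intro _ 1 S_ub).
have memS t : 0 <= t -> t < 1 -> t <= m -> S t.
  move=> t_ge0 t_lt1 t_le_m; split; first by rewrite t_ge0 t_lt1.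
  exact: density_rescaled_sub.
have sup_ge0 : 0 <= sup S by apply: le_supS; apply: memS; rewrite ?ltr01.
rewrite leNgt; apply/negP => sup_lt_m.
have /le_supS : S ((sup S + m) / 2).
  by apply: memS; have := m_le1; lra.
lra.
Qed.

Let eigenproj := U^t* *m diag_mx (delta_mx 0 k) *m U.

Let eigenproj_density : density eigenproj.
Proof.
apply: density_unitary_diag => // [i|]; first by rewrite mxE ler0n.
rewrite (bigD1 k) //= big1 ?addr0; first by rewrite mxE !eqxx.
by move=> i /negbTE i_neq_k; rewrite mxE i_neq_k andbF.
Qed.

Lemma weight_eigenprojector_le : weight rho eigenproj <= m.
Proof.
apply: ge_sup.
  exists 0; split; first by rewrite lexx ltr01.
  by apply: density_rescaled_sub; rewrite ?ltr01.
move=> t [/andP[_ t_lt1] [_ [psd _]]].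
have := psd (row k U); rewrite -/(qform _ _) qformZ qformB qformZ.
rewrite rhoE /eigenproj !qform_row_unitary_diag // pmulr_rge0 ?invr_sub1C_gt0 //.
by rewrite mxE !eqxx mulr1 subr_ge0 -mu_kE lecR.
Qed.

Lemma boundariness_min : boundariness rho = m.
Proof.
apply: inf_eq_min; last by move=> _ [x x_density <-]; apply: min_le_weight.
exists eigenproj => //.
by apply/le_anti; rewrite weight_eigenprojector_le min_le_weight.
Qed.

Lemma trnorm_sub_eigenprojector : trnorm (rho - eigenproj) = 2 * (1 - m).
Proof.
have -> : rho - eigenproj = U^t* *m diag_mx (mu - delta_mx 0 k) *m U.
  rewrite rhoE /eigenproj -mulmxBl -mulmxBr; congr (_ *m _ *m _).
  by apply/matrixP => i j; rewrite !mxE mulrnBl.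
rewrite trnorm_unitary_diag // (bigD1 k) //=.
have -> : \sum_(i | i != k) `|(mu - delta_mx 0 k) 0 i| = 1 - mu 0 k.
  apply/esym; rewrite -sum_mu (bigD1 k) //= addrAC subrr add0r.
  by apply: eq_bigr => i /negbTE i_neq_k; rewrite !mxE i_neq_k subr0 ger0_norm.
rewrite !mxE !eqxx distrC ger0_norm ?subr_ge0; last first.
  by rewrite -sum_mu (ler_sum_elt k mu_ge0).
rewrite -mu_kE -[1]/((1%:C)%C) -rmorphB -rmorphD /=; lra.
Qed.

Lemma trnorm_sub_density_le xi : density xi -> trnorm (rho - xi) <= 2 * (1 - m).
Proof.
move=> xi_density; have [xi_herm [xi_psd tr_xi]] := xi_density.
have [rho_herm [_ tr_rho]] := rho_density.
have := hermsymmx_spectral (hermsymmxB rho_herm xi_herm).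
have := spectral_unitarymx (rho - xi).
set V := spectralmx _; set l := spectral_diag _ => Vu lE; rewrite lE.
rewrite trnorm_unitary_diag //.
have lE' i : l 0 i = qform (row i V) rho - qform (row i V) xi.
  by rewrite -(qform_row_unitary_diag Vu) -lE qformB.
under eq_bigr do rewrite lE'.
apply: sum_norm_subC_le => //.
- by move=> i; apply: xi_psd.
- move=> i; rewrite -[(m%:C)%C]mulr1 -(qform1_row_unitary Vu i) rhoE.
  exact: qform_unitary_diag_ge min_le_mu.
- by rewrite -(mxtrace_qform_unitary Vu).
- by rewrite -(mxtrace_qform_unitary Vu).
Qed.

Lemma sup_trnorm_sub_density :
  sup [set trnorm (rho - xi) | xi in [set xi | density xi]]
  = 2 * (1 - boundariness rho).
Proof.
rewrite boundariness_min; apply: sup_eq_max.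
  by exists eigenproj => //; apply: trnorm_sub_eigenprojector.
by move=> _ [xi xi_density <-]; apply: trnorm_sub_density_le.
Qed.

End MinimalEigenvalue.

Theorem proposition7 (R : realType) (d : nat) (rho : 'M[R[i]]_d) :
  density rho ->
  sup [set trnorm (rho - xi) | xi in [set xi | density xi]]
  = 2 * (1 - boundariness rho).
Proof.
case: d rho => [|n] rho rho_density.
  have [_ [_]] := rho_density; rewrite /mxtrace big_ord0 => /esym/eqP.
  by rewrite oner_eq0.
have [U [mu [U_unitary rhoE mu_ge0 sum_mu]]] := density_spectral rho_density.
have [k _ mu_min] := arg_minP (fun i => complex.Re (mu 0 i)) (isT : predT ord0).
exact: (sup_trnorm_sub_density U_unitary rhoE mu_ge0 sum_mu (fun i => mu_min i isT)).
Qed.
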